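(* Let $0<c_0<C_0<\infty$ and $\bar\lambda_{m,n}>0$ with $C_0\bar\lambda_{m,n}\le 1/2$, and let $K\ge1$. There exist constants $C_{\mathrm L},C_{\mathrm U}>0$ depending only on $c_0,C_0$ such that for all $\Lambda,\Lambda'\in\mathcal{L}_{K,\bar\lambda_{m,n}}$, $$\frac{C_{\mathrm L}}{\bar\lambda_{m,n}}\|\Lambda-\Lambda'\|_F^2\le \mathrm{d}_{\mathrm{KL}}\big(P^{(nm)}_\Lambda\,\big\|\,P^{(nm)}_{\Lambda'}\big)\le\frac{C_{\mathrm U}}{\bar\lambda_{m,n}}\|\Lambda-\Lambda'\|_F^2.$$
   Context: $\mathcal{L}_{K,\bar\lambda_{m,n}}:=\{\Lambda=(\lambda_{ij})\in\mathbb{R}_+^{n\times m}:\mathrm{rank}(\Lambda)\le K,\ c_0\bar\lambda_{m,n}\le\lambda_{ij}\le C_0\bar\lambda_{m,n}\ \forall (i,j)\in[n]\times[m]\}$. For $\Lambda$ in this class, $P^{(nm)}_\Lambda:=\bigotimes_{i=1}^n\bigotimes_{j=1}^m\mathrm{Bern}(1-e^{-\lambda_{ij}})$ is a product of Bernoulli laws on $\{0,1\}^{n\times m}$. $\mathrm{d}_{\mathrm{KL}}$ is the Kullback–Leibler divergence and $\|\cdot\|_F$ the Frobenius norm. *)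

From HB Require Import structures.
From mathcomp Require Import all_boot all_order all_algebra.
From mathcomp Require Import all_classical all_reals all_analysis.
Set Implicit Arguments. Unset Strict Implicit. Unset Printing Implicit Defensive.
Import Order.TTheory GRing.Theory Num.Theory.
Local Open Scope ring_scope.

(* Kullback-Leibler divergence between two probability mass functions on a
   finite type: sum_x P x * ln (P x / Q x).  (Convention 0 ln 0 = 0 holds since
   P x = 0 kills the term; in the application all masses are positive.) *)
Definition dKL (R : realType) (T : finType) (P Q : T -> R) : R :=
  \sum_(x : T) P x * ln (P x / Q x).

Definition bern_pmf (R : realType) (p : R) (b : bool) : R :=
  if b then p else 1 - p.

Definition PLambda (R : realType) (n m : nat) (L : 'M[R]_(n, m))
  (x : {ffun 'I_n * 'I_m -> bool}) : R :=
  \prod_(ij : 'I_n * 'I_m) bern_pmf (1 - expR (- L ij.1 ij.2)) (x ij).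

Definition frob2 (R : realType) (n m : nat) (A : 'M[R]_(n, m)) : R :=
  \sum_(i < n) \sum_(j < m) (A i j) ^+ 2.

Definition in_LK (R : realType) (n m K : nat) (c0 C0 lbar : R)
  (L : 'M[R]_(n, m)) : Prop :=
  (\rank L <= K)%N /\
  (forall i j, c0 * lbar <= L i j /\ L i j <= C0 * lbar).

From HB Require Import structures.
From mathcomp Require Import all_boot all_order all_algebra.
From mathcomp Require Import all_classical all_reals all_analysis.
From mathcomp Require Import ring lra.

(* Kullback-Leibler divergence tensorizes over the independent coordinates, so
   it suffices to compare two Bernoulli laws with parameters p = 1 - e^{-x} and
   q = 1 - e^{-y}, where x, y lie in [c0 lbar, C0 lbar], a subset of (0, 1/2].
   There the slope e^{-t} of t |-> 1 - e^{-t} lies in [1/2, 1], so |p - q| is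
   comparable to |x - y|, while p, q and q (1 - q) are all comparable to lbar.
   The chi-square bound d_KL <= (p - q)^2 / (q (1 - q)) then gives the upper
   estimate, and the Hellinger bound d_KL >= (sqrt p - sqrt q)^2
   = (p - q)^2 / (sqrt p + sqrt q)^2 the lower one. *)

Import Order.TTheory GRing.Theory Num.Theory.
Local Open Scope ring_scope.

Section KullbackLeibler.
Variable R : realType.

Lemma ln_le_subr1 (x : R) : 0 < x -> ln x <= x - 1.
Proof. by move=> x0; have := @le_ln1Dx R (x - 1); rewrite addrCA subrr addr0; apply; lra. Qed.

Lemma ln_prod (I : finType) (F : I -> R) :
  (forall i, 0 < F i) -> ln (\prod_i F i) = \sum_i ln (F i).
Proof.
move=> F0; pose lnP (a b : R) := 0 < a /\ ln a = b.
have [] // : lnP (\prod_i F i) (\sum_i ln (F i)).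
apply: (big_rec2 lnP); first by split; [exact: ltr01 | exact: ln1].
by move=> i a b _ [a0 <-]; split; [exact: mulr_gt0 | rewrite lnM // posrE].
Qed.

Lemma sum_prod_mul_coord (I J : finType) (F : I -> J -> R) (h : J -> R) (k : I) :
  (forall i, \sum_j F i j = 1) ->
  \sum_(x : {ffun I -> J}) (\prod_i F i (x i)) * h (x k) = \sum_j F k j * h j.
Proof.
move=> F1; pose G i j := if i == k then F i j * h j else F i j.
have -> : \sum_(x : {ffun I -> J}) (\prod_i F i (x i)) * h (x k)
        = \sum_(x : {ffun I -> J}) \prod_i G i (x i).
  apply: eq_bigr => x _; rewrite (bigD1 k) //= [RHS](bigD1 k) //= /G eqxx mulrAC.
  by congr (_ * _); apply: eq_bigr => i /negbTE ->.
rewrite -bigA_distr_bigA /= (bigD1 k) //= [X in _ * X]big1 ?mulr1.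
  by apply: eq_bigr => j _; rewrite /G eqxx.
by move=> i /negbTE ik; rewrite -(F1 i); apply: eq_bigr => j _; rewrite /G ik.
Qed.

Lemma dKL_prod (I J : finType) (F G : I -> J -> R) :
  (forall i j, 0 < F i j) -> (forall i j, 0 < G i j) ->
  (forall i, \sum_j F i j = 1) ->
  dKL (fun x : {ffun I -> J} => \prod_i F i (x i)) (fun x => \prod_i G i (x i))
  = \sum_i dKL (F i) (G i).
Proof.
move=> F0 G0 F1; rewrite /dKL.
under eq_bigr => x _.
  rewrite -prodf_div ln_prod => [|i]; last exact: divr_gt0.
  rewrite mulr_sumr.
over.
rewrite exchange_big; apply: eq_bigr => i _.
by rewrite -sum_prod_mul_coord.
Qed.

Lemma mul_ln_div_ge (s t : R) : 0 < s -> 0 < t ->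
  2 * (s - Num.sqrt (s * t)) <= s * ln (s / t).
Proof.
move=> s0 t0; set r := Num.sqrt (t / s).
have r0 : 0 < r by rewrite sqrtr_gt0 divr_gt0.
have sr : Num.sqrt (s * t) = s * r.
  have -> : s * t = s ^+ 2 * (t / s) by field; rewrite gt_eqF.
  by rewrite sqrtrM ?sqr_ge0 // sqrtr_sqr ger0_norm // ltW.
have lnE : ln (s / t) = - (2 * ln r).
  rewrite mulr_natl -lnXn // sqr_sqrtr ?divr_ge0 ?ltW // -lnV ?posrE ?divr_gt0 //.
  by rewrite invf_div.
rewrite sr lnE; have := @ln_le_subr1 r r0; nra.
Qed.

Section FiniteDistributions.
Context {T : finType} {P Q : T -> R}.
Hypotheses (P1 : \sum_t P t = 1) (Q1 : \sum_t Q t = 1) (Q0 : forall t, 0 < Q t).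

Lemma dKL_le_chi2 : (forall t, 0 <= P t) ->
  dKL P Q <= \sum_t (P t - Q t) ^+ 2 / Q t.
Proof.
move=> P0.
have chi2E : \sum_t (P t - Q t) ^+ 2 / Q t = \sum_t P t * (P t / Q t - 1).
  transitivity (\sum_t (P t * (P t / Q t - 1) + (Q t - P t))).
    by apply: eq_bigr => t _; field; rewrite gt_eqF.
  by rewrite big_split sumrB /= P1 Q1 subrr addr0.
rewrite chi2E; apply: ler_sum => t _.
have [->|Pt0] := eqVneq (P t) 0; first by rewrite !mul0r.
apply: ler_wpM2l; first exact: P0.
by apply: ln_le_subr1; rewrite divr_gt0 // lt_def Pt0 P0.
Qed.

Lemma hellinger_le_dKL : (forall t, 0 < P t) ->
  \sum_t (Num.sqrt (P t) - Num.sqrt (Q t)) ^+ 2 <= dKL P Q.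
Proof.
move=> P0.
have hellingerE : \sum_t (Num.sqrt (P t) - Num.sqrt (Q t)) ^+ 2
                = \sum_t 2 * (P t - Num.sqrt (P t * Q t)).
  transitivity (\sum_t (2 * (P t - Num.sqrt (P t * Q t)) + (Q t - P t))).
    by apply: eq_bigr => t _; rewrite sqrtrM ?sqrrB ?sqr_sqrtr ?ltW //; ring.
  by rewrite big_split sumrB /= P1 Q1 subrr addr0.
by rewrite hellingerE; apply: ler_sum => t _; apply: mul_ln_div_ge.
Qed.
End FiniteDistributions.

Lemma sum_bern_pmf (p : R) : \sum_b bern_pmf p b = 1.
Proof. by rewrite big_bool /= addrC subrK. Qed.

Lemma bern_pmf_gt0 (p : R) : 0 < p < 1 -> forall b, 0 < bern_pmf p b.
Proof. by case/andP => p0 p1 [] /=; lra. Qed.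

Lemma dKL_bern_le_chi2 (p q : R) : 0 <= p <= 1 -> 0 < q < 1 ->
  dKL (bern_pmf p) (bern_pmf q) <= (p - q) ^+ 2 / (q * (1 - q)).
Proof.
move=> p01 q01.
have -> : (p - q) ^+ 2 / (q * (1 - q))
        = \sum_b (bern_pmf p b - bern_pmf q b) ^+ 2 / bern_pmf q b.
  by rewrite big_bool /=; field; case/andP: q01 => q0 q1; rewrite subr_eq0 !gt_eqF.
apply: dKL_le_chi2 (sum_bern_pmf p) (sum_bern_pmf q) (bern_pmf_gt0 _ q01) _.
by case/andP: p01 => p0 p1 [] /=; lra.
Qed.

Lemma dKL_bern_ge_hellinger (p q : R) : 0 < p < 1 -> 0 < q < 1 ->
  (Num.sqrt p - Num.sqrt q) ^+ 2 <= dKL (bern_pmf p) (bern_pmf q).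
Proof.
move=> p01 q01.
apply: le_trans (hellinger_le_dKL (sum_bern_pmf p) (sum_bern_pmf q)
  (bern_pmf_gt0 _ q01) (bern_pmf_gt0 _ p01)).
by rewrite big_bool /= lerDl sqr_ge0.
Qed.

Lemma expR_sub_ge (a b : R) : expR b * (a - b) <= expR a - expR b.
Proof.
have -> : expR a = expR b * expR (a - b) by rewrite -expRD addrCA subrr addr0.
by have := expR_ge1Dx (a - b); have := expR_gt0 b; nra.
Qed.

Lemma expR_sub_le (a b : R) : expR a - expR b <= expR a * (a - b).
Proof. by have := expR_sub_ge b a; lra. Qed.

Lemma expRN_ge_half (x : R) : x <= 2^-1 -> 2^-1 <= expR (- x).
Proof. by have := expR_ge1Dx (- x); lra. Qed.

Lemma sqr_expRN_sub (x y : R) : 0 <= x <= 2^-1 -> 0 <= y <= 2^-1 ->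
  (x - y) ^+ 2 / 4 <= (expR (- x) - expR (- y)) ^+ 2 <= (x - y) ^+ 2.
Proof.
case/andP=> x0 x1 /andP[y0 y1].
have u1 : expR (- x) <= 1 by rewrite expR_le1 oppr_le0.
have v1 : expR (- y) <= 1 by rewrite expR_le1 oppr_le0.
have := expR_sub_ge (- x) (- y); have := expR_sub_le (- x) (- y).
have := expRN_ge_half _ x1; have := expRN_ge_half _ y1.
move: u1 v1; set u := expR (- x); set v := expR (- y) => u1 v1 v0 u0 le_uv ge_uv.
have [xy|yx] := lerP x y.
  have lo : (y - x) / 2 <= u - v by nra.
  have hi : u - v <= y - x by nra.
  by apply/andP; split; nra.
have lo : y - x <= u - v by nra.
have hi : u - v <= (y - x) / 2 by nra.
by apply/andP; split; nra.
Qed.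

Lemma one_sub_expRN_bounds (x : R) : 0 <= x <= 2^-1 -> x / 2 <= 1 - expR (- x) <= x.
Proof.
case/andP=> x0 x1; have := expR_sub_ge 0 (- x); rewrite expR0 sub0r opprK.
move=> tangent; have := expR_ge1Dx (- x); have := expRN_ge_half _ x1.
by move=> half ge1Dx; apply/andP; split; nra.
Qed.

Lemma one_sub_expRN_in01 (x : R) : 0 < x -> 0 < 1 - expR (- x) < 1.
Proof.
move=> x0; have := expR_gt0 (- x).
have : expR (- x) < 1 by rewrite expR_lt1 oppr_lt0.
by move=> ? ?; apply/andP; split; lra.
Qed.

Lemma dKL_bern_expRN_ge (b x y : R) : 0 < x <= b -> 0 < y <= b -> b <= 2^-1 ->
  (16 * b)^-1 * (x - y) ^+ 2
    <= dKL (bern_pmf (1 - expR (- x))) (bern_pmf (1 - expR (- y))).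
Proof.
move=> /andP[x0 xb] /andP[y0 yb] b1.
have x01 : 0 <= x <= 2^-1 by apply/andP; split; lra.
have y01 : 0 <= y <= 2^-1 by apply/andP; split; lra.
apply: le_trans (dKL_bern_ge_hellinger _ _ (one_sub_expRN_in01 _ x0)
                                         (one_sub_expRN_in01 _ y0)).
have /andP[_ px] := one_sub_expRN_bounds _ x01.
have /andP[_ qy] := one_sub_expRN_bounds _ y01.
have /andP[p0 _] := one_sub_expRN_in01 _ x0.
have /andP[q0 _] := one_sub_expRN_in01 _ y0.
have /andP[sqr_pq _] := sqr_expRN_sub _ _ x01 y01.
move: px qy p0 q0 sqr_pq.
rewrite (_ : expR (- x) - expR (- y) = (1 - expR (- y)) - (1 - expR (- x))); last by ring.
set p := 1 - expR (- x); set q := 1 - expR (- y) => px qy p0 q0 sqr_pq.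
have sp : Num.sqrt p ^+ 2 = p by rewrite sqr_sqrtr // ltW.
have sq : Num.sqrt q ^+ 2 = q by rewrite sqr_sqrtr // ltW.
move: sp sq; set a := Num.sqrt p; set c := Num.sqrt q => sp sq.
have sum_sqr : (a + c) ^+ 2 <= 4 * b by have := sqr_ge0 (a - c); nra.
have diff_sqr : (q - p) ^+ 2 <= (a - c) ^+ 2 * (4 * b).
  rewrite -sp -sq (_ : _ - _ = (c - a) * (c + a)) ?exprMn; last by ring.
  by rewrite -sqrrN opprB [c + a]addrC; apply: ler_wpM2l => //; exact: sqr_ge0.
by rewrite ler_pdivrMl; lra.
Qed.

Lemma dKL_bern_expRN_le (a x y : R) : 0 < a -> 0 < x <= 2^-1 -> a <= y <= 2^-1 ->
  dKL (bern_pmf (1 - expR (- x))) (bern_pmf (1 - expR (- y)))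
    <= 4 / a * (x - y) ^+ 2.
Proof.
move=> a0 /andP[x0 x1] /andP[ay y1].
have y0 : 0 < y by lra.
have x01 : 0 <= x <= 2^-1 by apply/andP; split; lra.
have y01 : 0 <= y <= 2^-1 by apply/andP; split; lra.
have p01 : 0 <= 1 - expR (- x) <= 1.
  by case/andP: (one_sub_expRN_in01 _ x0) => ? ?; apply/andP; split; lra.
apply: le_trans (dKL_bern_le_chi2 _ _ p01 (one_sub_expRN_in01 _ y0)) _.
have /andP[qy _] := one_sub_expRN_bounds _ y01.
have v_ge := expRN_ge_half _ y1.
have /andP[_ sqr_uv] := sqr_expRN_sub _ _ x01 y01.
move: qy v_ge sqr_uv; set u := expR (- x); set v := expR (- y) => qy v_ge sqr_uv.
set V := (1 - v) * (1 - (1 - v)).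
have V_ge : a / 4 <= V by rewrite /V; nra.
have -> : 4 / a * (x - y) ^+ 2 = (x - y) ^+ 2 / (a / 4) by field; rewrite gt_eqF.
rewrite ler_pdivrMr; last lra.
rewrite mulrAC ler_pdivlMr; last lra.
have h1 : (u - v) ^+ 2 * (a / 4) <= (x - y) ^+ 2 * (a / 4) by apply: ler_wpM2r => //; lra.
have h2 : (x - y) ^+ 2 * (a / 4) <= (x - y) ^+ 2 * V by apply: ler_wpM2l => //; exact: sqr_ge0.
lra.
Qed.

Lemma frob2E n m (A : 'M[R]_(n, m)) :
  frob2 A = \sum_(ij : 'I_n * 'I_m) A ij.1 ij.2 ^+ 2.
Proof. by rewrite /frob2 pair_big. Qed.

Lemma dKL_PLambda n m (L L' : 'M[R]_(n, m)) :
  (forall i j, 0 < L i j) -> (forall i j, 0 < L' i j) ->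
  dKL (PLambda L) (PLambda L') = \sum_(ij : 'I_n * 'I_m)
    dKL (bern_pmf (1 - expR (- L ij.1 ij.2))) (bern_pmf (1 - expR (- L' ij.1 ij.2))).
Proof.
move=> L0 L'0; apply: (dKL_prod _ _ (fun ij => bern_pmf (1 - expR (- L ij.1 ij.2)))
                                    (fun ij => bern_pmf (1 - expR (- L' ij.1 ij.2)))).
- by move=> ij; apply/bern_pmf_gt0/one_sub_expRN_in01.
- by move=> ij; apply/bern_pmf_gt0/one_sub_expRN_in01.
- by move=> ij; apply: sum_bern_pmf.
Qed.
End KullbackLeibler.

Theorem theoremL6 (R : realType) (c0 C0 : R) :
  0 < c0 -> c0 < C0 ->
  exists CL CU : R, 0 < CL /\ 0 < CU /\
    forall (lbar : R) (K n m : nat) (L L' : 'M[R]_(n, m)),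
      0 < lbar -> C0 * lbar <= 2^-1 -> (1 <= K)%N ->
      in_LK K c0 C0 lbar L -> in_LK K c0 C0 lbar L' ->
      CL / lbar * frob2 (L - L') <= dKL (PLambda L) (PLambda L') /\
      dKL (PLambda L) (PLambda L') <= CU / lbar * frob2 (L - L').
Proof.
move=> c0_gt0 c0_lt_C0; have C0_gt0 : 0 < C0 by lra.
exists (16 * C0)^-1, (4 / c0); split; first by rewrite invr_gt0 mulr_gt0.
(* Only the entrywise bounds of the class matter. *)
split=> [|lbar K n m L L' lbar_gt0 small _ [_ HL] [_ HL']]; first exact: divr_gt0.
have c0lbar_gt0 : 0 < c0 * lbar by exact: mulr_gt0.
have entry_gt0 (A : 'M[R]_(n, m)) :
    (forall i j, c0 * lbar <= A i j /\ A i j <= C0 * lbar) -> forall i j, 0 < A i j.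
  by move=> HA i j; have [] := HA i j; lra.
rewrite dKL_PLambda; [|exact: entry_gt0 _ HL|exact: entry_gt0 _ HL'].
rewrite frob2E !mulr_sumr.
split; apply: ler_sum => -[i j] _ /=; rewrite !mxE;
  have [lo hi] := HL i j; have [lo' hi'] := HL' i j.
- rewrite -invfM -[16 * C0 * lbar]mulrA.
  by apply: dKL_bern_expRN_ge; rewrite ?small //; apply/andP; split; lra.
- rewrite -[4 / c0 / lbar]mulrA -invfM.
  by apply: dKL_bern_expRN_le => //; apply/andP; split; lra.
Qed.
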